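(* Let $A=(a(x),dF(x))$ and $B=(b(x),dF(x))$ be games, assume $f(p)\ge h(p)$ for each $p\in[0,1]$, and let $L:=\sup_{0<p<1}g(p)+1$. Then $V(p,t,u):=\int\log\big(\frac{pa(x)+(1-p)b(x)}{u}t-t+1\big)\,dF(x)$ is continuous on $\overline{D}=\{(p,t,u):0\le p\le1,\ 0\le t\le1,\ f(p)\le u\le L\}$.
   Context: A game is a pair $(a(x),dF(x))$ with $dF$ a probability measure on $\mathbb{R}$ and $a\ge0$ measurable with finite positive integral. A real $r$ is fixed; conventions $\exp(-\infty)=0$, $1/(+\infty)=0$. For $p\in[0,1]$ put $c_p(x):=pa(x)+(1-p)b(x)$, $f(p):=\exp(\int\log c_p\,dF)/e^r$, $h(p):=1/\int\frac{1}{c_p(x)}dF(x)$. $g(p)$ denotes the value $u>0$ such that for some $t_u$ (with $0<t_u\le1$) the system $\exp\big(\int\log(\frac{c_p(x)}{u}t_u-t_u+1)\,dF(x)\big)=e^r$, $\int\frac{c_p(x)-u}{c_p(x)t_u-ut_u+u}\,dF(x)=0$ holds; such a solution is unique when it exists, and it exists for every $p$ under the hypothesis $f\ge h$. *)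

(* R : realType, the "real line" with its
   Borel sigma-algebra; dF is a probability measure P on it. *)
From HB Require Import structures.
From mathcomp Require Import all_boot all_order all_algebra.
From mathcomp Require Import all_classical all_reals all_analysis.
Set Implicit Arguments.
Unset Strict Implicit.
Unset Printing Implicit Defensive.
Import Order.TTheory GRing.Theory Num.Theory.
Import numFieldNormedType.Exports.
Local Open Scope classical_set_scope.
Local Open Scope ring_scope.

Definition game (R : realType) (P : probability R R) (a : R -> R) : Prop :=
  [/\ measurable_fun setT a, (forall x, 0 <= a x),
      P.-integrable setT (EFin \o a) & (0 < \int[P]_x (a x)%:E)%E].

(* extended logarithm: log 0 = -oo (arguments are always >= 0 here) *)
Definition elog (R : realType) (y : R) : \bar R :=
  if y <= 0 then -oo%E else (ln y)%:E.

(* extended exponential: exp(-oo) = 0 (+oo never occurs: positive parts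
   are integrable; sent to 0 arbitrarily) *)
Definition eexp (R : realType) (y : \bar R) : R :=
  match y with EFin z => expR z | _ => 0 end.

Definition einv (R : realType) (y : \bar R) : R :=
  match y with EFin z => z^-1 | _ => 0 end.

Section defs.
Variables (R : realType) (P : probability R R) (a b : R -> R) (r : R).

Definition cp (p : R) (x : R) : R := p * a x + (1 - p) * b x.

Definition fgame (p : R) : R := eexp (\int[P]_x elog (cp p x)) / expR r.

Definition hgame (p : R) : R :=
  einv (\int[P]_x (if cp p x == 0%R then +oo%E else ((cp p x)^-1)%:E)).

Definition Vgame (p t u : R) : \bar R :=
  (\int[P]_x elog (cp p x / u * t - t + 1)%R)%E.

(* (u, t_u) solves the system defining g(p); the integrand
   (c-u)/(c t - u t + u) equals -oo when the denominator vanishes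
   (this happens only for t = 1, c = 0, where the numerator is -u < 0) *)
Definition gsol (p u : R) : Prop :=
  0 < u /\ exists t : R, [/\ 0 < t, t <= 1,
    eexp (Vgame p t u) = expR r &
    (\int[P]_x (let d := (cp p x * t - u * t + u)%R in
                 if d == 0%R then -oo else ((cp p x - u) / d)%R%:E))%E = 0%E].

(* L = sup_{0<p<1} g(p) + 1, taken in the extended reals; since the solution
   of the system is unique, {u | exists p in (0,1), gsol p u} = {g(p) | 0<p<1} *)
Definition Lgame : \bar R :=
  (ereal_sup [set u%:E | u in [set u : R | exists p : R, (0 < p < 1)%R /\ gsol p u]] + 1)%E.

Definition Dbar : set (R * R * R) :=
  [set q | let: (p, t, u) := q in
     [/\ 0 <= p <= 1, 0 <= t <= 1, fgame p <= u, 0 < u & (u%:E <= Lgame)%E]].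

End defs.

From HB Require Import structures.
From mathcomp Require Import all_boot all_order all_algebra.
From mathcomp Require Import all_classical all_reals all_analysis measurable_realfun.
From mathcomp Require Import ring lra.
Import Order.TTheory GRing.Theory Num.Theory.
Import numFieldNormedType.Exports.
Import Num.Def.
Set Implicit Arguments.
Unset Strict Implicit.
Unset Printing Implicit Defensive.
Local Open Scope classical_set_scope.
Local Open Scope ring_scope.

(* For u > 0 the integrand of V is log (k1 a + k2 b + k3), with nonnegative
   coefficients k1 = t p / u, k2 = t (1 - p) / u, k3 = 1 - t depending
   continuously on (p, t, u).  Write log = log+ - log-.  If the coefficients k
   are close to c, then g = k1 a + k2 b + k3 and g0 = c1 a + c2 b + c3 satisfy
   g0 / l <= g <= g0 + e (a + b + 1) with l close to 1 and e close to 0, so the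
   integrals of log+ g and log- g differ from those at g0 by at most ln l or
   e E[a + b + 1]; the integral of log+ g0 <= g0 is finite.  The one bound that
   this does not give is the lower bound on the integral of log- g0, which may
   be +oo: monotone convergence of the integrals of log- (g0 + (a + b + 1) / n)
   supplies it.  Hence the extended-real difference V is continuous. *)

Section elog_parts.
Variable R : realType.
Implicit Types y z : R.

Definition elogp y : \bar R := (ln (maxr y 1))%:E.
Definition elogn y : \bar R := if y <= 0 then +oo%E else (maxr (- ln y) 0)%:E.

Lemma elog_funepos y : maxe (elog y) 0%E = elogp y.
Proof.
rewrite /elog /elogp; have [y0|y0] := leP y 0.
  by rewrite max_r ?leNye// max_r ?ln1// (le_trans y0).
have [y1|y1] := leP y 1.
  by rewrite max_r ?ln1// lee_fin ln_le0.
by rewrite max_l ?lee_fin ?(ltW y1)// ltW// ln_gt0.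
Qed.

Lemma elog_funeneg y : maxe (- elog y)%E 0%E = elogn y.
Proof.
rewrite /elog /elogn; have [y0|y0] := leP y 0; first by rewrite max_l ?leey.
by rewrite -EFinN -EFin_max.
Qed.

Lemma elogp_ge0 y : (0 <= elogp y)%E.
Proof. by rewrite lee_fin ln_ge0// le_max lexx orbT. Qed.

Lemma elogn_ge0 y : (0 <= elogn y)%E.
Proof.
by rewrite /elogn; case: ifP => _; rewrite ?leey// lee_fin le_max lexx orbT.
Qed.

Lemma elogp_le y : 0 <= y -> (elogp y <= y%:E)%E.
Proof.
move=> y0; rewrite /elogp lee_fin; have [y1|y1] := leP y 1; first by rewrite ln1.
by rewrite -[y in ln y](subrK 1 y) addrC (le_trans (le_ln1Dx _)) ?lerBlDr//; lra.
Qed.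

Lemma elogp_leD y y0 e : 0 <= y0 -> 0 <= e -> y <= y0 + e ->
  (elogp y <= elogp y0 + e%:E)%E.
Proof.
move=> y00 e0 yle; rewrite /elogp -EFinD lee_fin.
set m := maxr y0 1.
have m1 : 1 <= m by rewrite le_max lexx orbT.
have y0m : y0 <= m by rewrite le_max lexx.
have le_m : maxr y 1 <= m * (1 + e).
  rewrite ge_max mulrDr mulr1 (le_trans yle) ?lerD ?ler_peMl//=.
  by rewrite -[leLHS]addr0 lerD// mulr_ge0// (le_trans ler01).
have m0 : 0 < m by rewrite (lt_le_trans ltr01).
apply: (le_trans (y := ln (m * (1 + e)))).
  by rewrite ler_ln ?posrE ?lt_max ?ltr01 ?orbT ?mulr_gt0//; lra.
by rewrite lnM ?posrE// ?lerD2l ?le_ln1Dx//; lra.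
Qed.

Lemma elogp_le_ln y y0 l : 1 <= l -> 0 <= y0 -> y0 / l <= y ->
  (elogp y0 <= elogp y + (ln l)%:E)%E.
Proof.
move=> l1 y00 yle; rewrite /elogp -EFinD lee_fin.
have l0 : 0 < l by lra.
have mx0 : 0 < maxr y 1 by rewrite lt_max ltr01 orbT.
have my0 : 0 < maxr y0 1 by rewrite lt_max ltr01 orbT.
rewrite -lnM ?posrE// ler_ln ?posrE ?mulr_gt0// ge_max.
have y0yl : y0 <= y * l by rewrite -ler_pdivrMr.
have ym : 1 <= maxr y 1 by rewrite le_max lexx orbT.
rewrite (le_trans y0yl) ?ler_pM2r ?le_max ?lexx//=; nra.
Qed.

Lemma elogn_le_ln y y0 l : 1 <= l -> 0 <= y0 -> y0 / l <= y ->
  (elogn y <= elogn y0 + (ln l)%:E)%E.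
Proof.
move=> l1 y00 yle; rewrite /elogn.
have [y0n|y0p] := leP y0 0; first by rewrite addye ?leey.
have l0 : 0 < l by lra.
have yp : 0 < y by apply: lt_le_trans yle; rewrite divr_gt0.
rewrite ifN -?ltNge// -EFinD lee_fin.
have : ln (y0 / l) <= ln y by rewrite ler_ln ?posrE ?divr_gt0.
rewrite lnM ?posrE ?invr_gt0// lnV ?posrE// => lnle.
have lnl : 0 <= ln l by rewrite ln_ge0.
rewrite ge_max; apply/andP; split.
  by apply: le_trans (_ : - ln y0 + ln l <= _); [lra|rewrite lerD2r le_max lexx].
by apply: le_trans (_ : 0 + ln l <= _); [lra|rewrite lerD2r le_max lexx orbT].
Qed.

Lemma elogn_nincr y z : y <= z -> (elogn z <= elogn y)%E.
Proof.
move=> yz; rewrite /elogn.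
have [yn|yp] := leP y 0; first by case: ifP => _; rewrite ?leey.
have zp : 0 < z by rewrite (lt_le_trans yp).
have lnyz : ln y <= ln z by rewrite ler_ln ?posrE.
rewrite ifF; last by rewrite leNgt zp.
rewrite lee_fin ge_max !le_max lexx orbT andbT.
by apply/orP; left; lra.
Qed.

End elog_parts.

Lemma elogn_shift_cvg (R : realType) (y0 s : R) : 0 <= y0 -> 0 < s ->
  elogn (y0 + n.+1%:R^-1 * s) @[n --> \oo] --> elogn y0.
Proof.
move=> y00 s0.
have ypos n : 0 < y0 + n.+1%:R^-1 * s by rewrite ltr_wpDl// mulr_gt0.
have -> : (fun n => elogn (y0 + n.+1%:R^-1 * s)) =
    (fun n => (maxr (- ln (y0 + n.+1%:R^-1 * s)) 0)%:E).
  by apply/funext => n; rewrite /elogn ifF// leNgt ypos.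
have [->|y0p] := eqVneq y0 0.
  rewrite /elogn lexx; apply/cvgeyPge => A.
  have e0 : 0 < expR (- A) / s by rewrite divr_gt0// expR_gt0.
  near=> n.
  rewrite lee_fin le_max; apply/orP; left.
  rewrite lerNr -[X in _ <= X]expRK ler_ln ?posrE ?expR_gt0 ?add0r ?mulr_gt0//.
  rewrite -ler_pdivlMr//; apply: ltW.
  near: n; exact: (near_infty_natSinv_lt (PosNum e0)).
have {}y0p : 0 < y0 by rewrite lt_neqAle eq_sym y0p.
rewrite /elogn ifF ?leNgt ?y0p//.
apply: cvg_EFin; first exact: nearW.
have hy : y0 + n.+1%:R^-1 * s @[n --> \oo] --> y0.
  rewrite -[X in _ --> X]addr0; apply: cvgD; first exact: cvg_cst.
  by rewrite -(mul0r s); apply: cvgMr_tmp; exact: cvg_harmonic.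
have hc : {for y0, continuous (fun y : R => maxr (- ln y) 0)}.
  apply: (@continuous_max _ _ (fun y : R => - ln y) (fun _ => 0)).
    by apply: continuousN; exact: continuous_ln.
  exact: cst_continuous.
exact: (cvg_comp _ _ hy hc).
Unshelve. all: by end_near.
Qed.

Lemma cvge_near_bounds (R : realType) (X : Type) (F : set_system X)
    (FF : Filter F) (x : X -> \bar R) (l : \bar R) :
  (forall a : R, (a%:E < l)%E -> \forall t \near F, (a%:E <= x t)%E) ->
  (forall b : R, (l < b%:E)%E -> \forall t \near F, (x t <= b%:E)%E) ->
  x @ F --> l.
Proof.
move=> lo up; case: l lo up => [r||] lo up.
- have near_ball e : 0 < e ->
      \forall t \near F, exists2 y, x t = y%:E & `|r - y| <= e.
    move=> e0; near=> t.
    have : ((r - e)%:E <= x t)%E by near: t; apply: lo; rewrite lte_fin; lra.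
    have : (x t <= (r + e)%:E)%E by near: t; apply: up; rewrite lte_fin; lra.
    case: (x t) => [y||]//; rewrite !lee_fin => yle ley.
    by exists y => //; rewrite ler_distlC; apply/andP; split.
  apply/fine_cvgP; split; first by apply: filterS (near_ball _ ltr01) => t [y ->].
  apply/cvgrPdist_le => e e0; apply: filterS (near_ball _ e0) => t [y xy ry].
  by rewrite /= xy.
- by apply/cvgeyPge => A; apply: lo; rewrite ltry.
- by apply/cvgeNyPle => A; apply: up; rewrite ltNyr.
Unshelve. all: by end_near.
Qed.

Section cvgr_near.
Context {R : realType} {X : Type} {F : set_system X} {FF : Filter F}.
Lemma cvgr_near_le_add (c : X -> R) (c0 e : R) : c @ F --> c0 -> 0 < e ->
  \forall t \near F, c t <= c0 + e.
Proof.
move=> cc0 e0; near=> t; apply: ltW; near: t.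
by apply: (cvgr_lt c0 cc0); rewrite ltrDl.
Unshelve. all: by end_near.
Qed.

Lemma cvgr_near_ge_div (c : X -> R) (c0 l : R) : c @ F --> c0 -> 1 < l ->
  (\forall t \near F, 0 <= c t) -> \forall t \near F, c0 / l <= c t.
Proof.
move=> cc0 l1 c_ge0; have l0 : 0 < l by lra.
have [c0_le0|c0_gt0] := leP c0 0.
  by apply: filterS c_ge0 => t; apply: le_trans; rewrite pmulr_lle0 ?invr_gt0.
near=> t; apply: ltW; near: t.
by apply: (cvgr_gt c0 cc0); rewrite ltr_pdivrMr// ltr_pMr.
Unshelve. all: by end_near.
Qed.

End cvgr_near.

Lemma measurable_elog (R : realType) : measurable_fun setT (@elog R).
Proof.
rewrite /elog; apply: measurable_fun_if => //.
- by apply: measurable_fun_ler.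
- by apply: measurable_funTS; apply: measurableT_comp => //; exact: measurable_ln.
Qed.

Section elog_integral.
Context {d} {T : measurableType d} {R : realType} (P : probability T R).
Implicit Types f g h : T -> R.
Local Open Scope ereal_scope.

Lemma measurable_elogp f : measurable_fun setT f ->
  measurable_fun setT (fun x => elogp (f x)).
Proof.
move=> mf; have -> : (fun x => elogp (f x)) = (fun x => elog (f x))^\+.
  by apply/funext => x; rewrite funeposE elog_funepos.
by apply: measurable_funepos; exact: (measurableT_comp (@measurable_elog R) mf).
Qed.

Lemma measurable_elogn f : measurable_fun setT f ->
  measurable_fun setT (fun x => elogn (f x)).
Proof.
move=> mf; have -> : (fun x => elogn (f x)) = (fun x => elog (f x))^\-.
  by apply/funext => x; rewrite funenegE elog_funeneg.
by apply: measurable_funeneg; exact: (measurableT_comp (@measurable_elog R) mf).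
Qed.

Lemma integral_elogE f :
  \int[P]_x elog (f x) = \int[P]_x elogp (f x) - \int[P]_x elogn (f x).
Proof.
by rewrite integralE; congr (_ - _); apply: eq_integral => x _;
  rewrite ?funeposE ?funenegE ?elog_funepos ?elog_funeneg.
Qed.

Lemma integral_cst_prob (c : R) : \int[P]_x c%:E = c%:E.
Proof. by rewrite integral_cst//= probability_setT mule1. Qed.

Lemma ge0_le_integral_add (u v w : T -> \bar R) :
  measurable_fun setT u -> measurable_fun setT v -> measurable_fun setT w ->
  (forall x, 0 <= u x) -> (forall x, 0 <= v x) -> (forall x, 0 <= w x) ->
  (forall x, u x <= v x + w x) ->
  \int[P]_x u x <= \int[P]_x v x + \int[P]_x w x.
Proof.
move=> mu mv mw u0 v0 w0 uvw; rewrite -ge0_integralD//.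
by apply: ge0_le_integral => //; exact: emeasurable_funD.
Qed.

Lemma integral_elogp_fin_num f : measurable_fun setT f ->
  P.-integrable setT (EFin \o f) -> (forall x, (0 <= f x)%R) ->
  \int[P]_x elogp (f x) \is a fin_num.
Proof.
move=> mf if_ f0.
rewrite ge0_fin_numE ?integral_ge0// => [|x _]; last exact: elogp_ge0.
apply: le_lt_trans (integrable_lty measurableT if_).
apply: ge0_le_integral => //.
- by move=> x _; exact: elogp_ge0.
- exact: measurable_elogp.
- exact/measurable_EFinP.
- by move=> x _; exact: elogp_le.
Qed.

Lemma cvg_integral_elogn_shift f h :
  measurable_fun setT f -> measurable_fun setT h ->
  (forall x, 0 <= f x)%R -> (forall x, 0 < h x)%R ->
  \int[P]_x elogn (f x + n.+1%:R^-1 * h x) @[n --> \oo] --> \int[P]_x elogn (f x).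
Proof.
move=> mf mh f0 h0.
pose u n x := elogn (f x + n.+1%:R^-1 * h x).
have mu n : measurable_fun setT (u n).
  apply: measurable_elogn; apply: measurable_funD => //.
  exact: measurable_funM.
have u0 n x : [set: T] x -> 0 <= u n x by move=> _; exact: elogn_ge0.
have nd_u x : [set: T] x -> {homo u^~ x : n m / (n <= m)%N >-> n <= m}.
  move=> _ n m nm; apply: elogn_nincr; rewrite lerD2l ler_pM2r//.
  by rewrite lef_pV2 ?posrE// ler_nat.
have := @cvg_monotone_convergence _ _ _ P setT measurableT u mu u0 nd_u.
congr (_ --> _); apply: eq_integral => x _.
by apply: cvg_lim => //; apply: elogn_shift_cvg; [exact: f0|exact: h0].
Qed.

End elog_integral.

Section elog_integral_continuity.
Context d (T : measurableType d) (R : realType) (P : probability T R).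
Context (X : Type) (F : set_system X) (FF : Filter F).
Variables (g : X -> T -> R) (g0 s : T -> R).
Hypotheses (mg : forall t, measurable_fun setT (g t)).
Hypotheses (mg0 : measurable_fun setT g0) (ms : measurable_fun setT s).
Hypotheses (g0_ge0 : forall x, 0 <= g0 x) (s_gt0 : forall x, 0 < s x).
Hypotheses (int_g0 : P.-integrable setT (EFin \o g0)).
Hypotheses (int_s : P.-integrable setT (EFin \o s)).
Hypothesis g_le_add : forall e, 0 < e ->
  \forall t \near F, forall x, g t x <= g0 x + e * s x.
Hypothesis g_ge_div : forall l, 1 < l ->
  \forall t \near F, forall x, g0 x / l <= g t x.

Lemma cvg_integral_elogp :
  (\int[P]_x elogp (g t x))%E @[t --> F] --> (\int[P]_x elogp (g0 x))%E.
Proof.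
have /fineK <- := integral_elogp_fin_num mg0 int_g0 g0_ge0.
set p0 := fine _.
have /fineK IsE := integrable_fin_num measurableT int_s.
set S := fine _ in IsE.
have S0 : 0 <= S.
  by rewrite -lee_fin IsE integral_ge0// => x _; rewrite lee_fin ltW.
apply: cvge_near_bounds => [a|b]; rewrite lte_fin => p0ab.
- have l1 : 1 < expR (p0 - a) by rewrite expR_gt1 subr_gt0.
  apply: filterS (g_ge_div l1) => t gt.
  have : (p0%:E <= \int[P]_x elogp (g t x) + \int[P]_x (ln (expR (p0 - a)))%:E)%E.
    rewrite /p0 fineK ?integral_elogp_fin_num//.
    apply: ge0_le_integral_add => //; try exact: measurable_elogp.
    + by move=> x; exact: elogp_ge0.
    + by move=> x; exact: elogp_ge0.
    + by move=> x; rewrite lee_fin expRK subr_ge0 ltW.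
    + by move=> x; apply: elogp_le_ln; [exact: ltW|exact: g0_ge0|exact: gt].
  by rewrite integral_cst_prob expRK -leeBlDr// -EFinB subKr.
- have e0 : 0 < (b - p0) / (S + 1) by rewrite divr_gt0 ?subr_gt0//; lra.
  apply: filterS (g_le_add e0) => t gt.
  set e := (b - p0) / (S + 1) in e0 gt.
  have : (\int[P]_x elogp (g t x) <= p0%:E + \int[P]_x (e * s x)%:E)%E.
    rewrite /p0 fineK ?integral_elogp_fin_num//.
    apply: ge0_le_integral_add => //; try exact: measurable_elogp.
    + by apply/measurable_EFinP; exact: measurable_funM.
    + by move=> x; exact: elogp_ge0.
    + by move=> x; exact: elogp_ge0.
    + by move=> x; rewrite lee_fin mulr_ge0// ltW.
    + move=> x; apply: elogp_leD; [exact: g0_ge0| |exact: gt].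
      by rewrite mulr_ge0// ltW.
  have -> : (\int[P]_x (e * s x)%:E = (e * S)%:E)%E.
    under eq_integral do rewrite EFinM.
    rewrite ge0_integralZl_EFin -?IsE ?ltW//.
    + by move=> x _; rewrite lee_fin ltW.
    + exact/measurable_EFinP.
  move=> /le_trans; apply; rewrite -EFinD lee_fin -lerBrDl.
  rewrite /e mulrAC ler_pdivrMr ?ler_pM2l ?subr_gt0//; lra.
Qed.

Lemma cvg_integral_elogn :
  (\int[P]_x elogn (g t x))%E @[t --> F] --> (\int[P]_x elogn (g0 x))%E.
Proof.
apply: cvge_near_bounds => [a aN|b Nb].
- have /filter_ex [n /ltW an] : \forall n \near \oo,
      (a%:E < \int[P]_x elogn (g0 x + n.+1%:R^-1 * s x))%E.
    exact: (cvg_integral_elogn_shift mg0 ms g0_ge0 s_gt0) (open_ereal_gt' aN).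
  have n0 : 0 < n.+1%:R^-1 :> R by rewrite invr_gt0.
  apply: filterS (g_le_add n0) => t gt.
  apply: (le_trans an); apply: ge0_le_integral => //.
  + by move=> x _; exact: elogn_ge0.
  + apply: measurable_elogn; apply: measurable_funD => //.
    exact: measurable_funM.
  + exact: measurable_elogn.
  + by move=> x _; apply: elogn_nincr; exact: gt.
- have /fineK N0E : (\int[P]_x elogn (g0 x))%E \is a fin_num.
    rewrite ge0_fin_numE ?(lt_trans Nb) ?ltry//.
    by apply: integral_ge0 => x _; exact: elogn_ge0.
  set n0 := fine _ in N0E; rewrite -N0E lte_fin in Nb.
  have l1 : 1 < expR (b - n0) by rewrite expR_gt1 subr_gt0.
  apply: filterS (g_ge_div l1) => t gt.
  apply: le_trans (_ : (_ <= \int[P]_x elogn (g0 x) +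
                           \int[P]_x (ln (expR (b - n0)))%:E)%E) _.
    apply: ge0_le_integral_add => //; try exact: measurable_elogn.
    + by move=> x; exact: elogn_ge0.
    + by move=> x; exact: elogn_ge0.
    + by move=> x; rewrite lee_fin expRK subr_ge0 ltW.
    + by move=> x; apply: elogn_le_ln; [exact: ltW|exact: g0_ge0|exact: gt].
  by rewrite integral_cst_prob expRK -N0E -EFinD subrKC.
Qed.

Lemma cvg_integral_elog :
  (\int[P]_x elog (g t x))%E @[t --> F] --> (\int[P]_x elog (g0 x))%E.
Proof.
rewrite integral_elogE; under eq_fun do rewrite integral_elogE.
apply: cvgeB; last exact: cvg_integral_elogn; last exact: cvg_integral_elogp.
exact/fin_num_adde_defr/integral_elogp_fin_num.
Qed.

End elog_integral_continuity.

Section elog_integral_lincomb.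
Context {d} {T : measurableType d} {R : realType} (P : probability T R).
Variables (a b : T -> R).
Hypotheses (ma : measurable_fun setT a) (mb : measurable_fun setT b).
Hypotheses (a_ge0 : forall x, 0 <= a x) (b_ge0 : forall x, 0 <= b x).
Hypotheses (int_a : P.-integrable setT (EFin \o a)).
Hypotheses (int_b : P.-integrable setT (EFin \o b)).

Definition lincomb (c1 c2 c3 : R) x := c1 * a x + c2 * b x + c3.

Lemma measurable_lincomb c1 c2 c3 : measurable_fun setT (lincomb c1 c2 c3).
Proof.
by apply: measurable_funD => //; apply: measurable_funD; exact: measurable_funM.
Qed.

Lemma integrable_lincomb c1 c2 c3 : P.-integrable setT (EFin \o lincomb c1 c2 c3).
Proof.
have int_ab := integrableD measurableT
  (integrableZl measurableT c1 int_a) (integrableZl measurableT c2 int_b).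
apply: eq_integrable measurableT _ _ _ (integrableD measurableT int_ab
  (finite_measure_integrable_cst P c3 measurableT)) => x _.
by rewrite /lincomb /= !EFinD !EFinM.
Qed.

Lemma lincomb_ge0 c1 c2 c3 x : 0 <= c1 -> 0 <= c2 -> 0 <= c3 ->
  0 <= lincomb c1 c2 c3 x.
Proof. by move=> *; rewrite /lincomb !addr_ge0// mulr_ge0. Qed.

Lemma cvg_integral_elog_lincomb (X : Type) (F : set_system X) (FF : Filter F)
    (k1 k2 k3 : X -> R) (c1 c2 c3 : R) :
  k1 @ F --> c1 -> k2 @ F --> c2 -> k3 @ F --> c3 ->
  0 <= c1 -> 0 <= c2 -> 0 <= c3 ->
  (\forall t \near F, [/\ 0 <= k1 t, 0 <= k2 t & 0 <= k3 t]) ->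
  (\int[P]_x elog (lincomb (k1 t) (k2 t) (k3 t) x))%E @[t --> F] -->
  (\int[P]_x elog (lincomb c1 c2 c3 x))%E.
Proof.
move=> kc1 kc2 kc3 c1_ge0 c2_ge0 c3_ge0 k_ge0.
apply: (@cvg_integral_elog _ _ _ P _ _ _ _ _ (lincomb 1 1 1)).
- by move=> t; exact: measurable_lincomb.
- exact: measurable_lincomb.
- exact: measurable_lincomb.
- by move=> x; exact: lincomb_ge0.
- by move=> x; rewrite /lincomb !mul1r ltr_wpDl ?addr_ge0.
- exact: integrable_lincomb.
- exact: integrable_lincomb.
- move=> e e0; near=> t => x; rewrite /lincomb.
  have le1 : k1 t <= c1 + e by near: t; exact: cvgr_near_le_add.
  have le2 : k2 t <= c2 + e by near: t; exact: cvgr_near_le_add.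
  have le3 : k3 t <= c3 + e by near: t; exact: cvgr_near_le_add.
  have : (c1 + e) * a x + (c2 + e) * b x + (c3 + e) =
    c1 * a x + c2 * b x + c3 + e * (1 * a x + 1 * b x + 1) by ring.
  by move=> <-; rewrite !lerD// ler_wpM2r.
- move=> l l1; near=> t => x; rewrite /lincomb.
  have ge1 : c1 / l <= k1 t.
    by near: t; apply: cvgr_near_ge_div => //; apply: filterS k_ge0 => ? [].
  have ge2 : c2 / l <= k2 t.
    by near: t; apply: cvgr_near_ge_div => //; apply: filterS k_ge0 => ? [].
  have ge3 : c3 / l <= k3 t.
    by near: t; apply: cvgr_near_ge_div => //; apply: filterS k_ge0 => ? [].
  have -> : (c1 * a x + c2 * b x + c3) / l = c1 / l * a x + c2 / l * b x + c3 / l.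
    by rewrite !mulrDl mulrAC [_ * b x / l]mulrAC.
  by rewrite !lerD// ler_wpM2r.
Unshelve. all: by end_near.
Qed.

End elog_integral_lincomb.

Lemma VgameE (R : realType) (P : probability R R) (a b : R -> R) (p t u : R) :
  Vgame P a b p t u =
  (\int[P]_x elog (lincomb a b (t * p / u) (t * (1 - p) / u) (1 - t) x))%E.
Proof. by apply: eq_integral => x _; congr elog; rewrite /cp /lincomb; ring. Qed.

Lemma Vgame_coef_continuous (R : realType) (q0 : R * R * R) : q0.2 != 0 ->
  [/\ {for q0, continuous (fun q : R * R * R => q.1.2 * q.1.1 / q.2)},
      {for q0, continuous (fun q : R * R * R => q.1.2 * (1 - q.1.1) / q.2)} &
      {for q0, continuous (fun q : R * R * R => 1 - q.1.2)}].
Proof.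
move=> u0; have ct : {for q0, continuous (fun q : R * R * R => q.1.2)}.
  by apply: cvg_comp; [exact: cvg_fst|exact: cvg_snd].
have cp : {for q0, continuous (fun q : R * R * R => q.1.1)}.
  by apply: cvg_comp; [exact: cvg_fst|exact: cvg_fst].
have cu' : {for q0, continuous (fun q : R * R * R => q.2^-1)}.
  by apply: cvgV => //; exact: cvg_snd.
split; first exact: cvgM (cvgM ct cp) cu'.
  exact: cvgM (cvgM ct (cvgB (cvg_cst _) cp)) cu'.
exact: cvgB (cvg_cst _) ct.
Qed.

Theorem lemmaD15 (R : realType) (P : probability R R) (a b : R -> R) (r : R) :
  game P a -> game P b ->
  (forall p : R, 0 <= p <= 1 -> hgame P a b p <= fgame P a b r p) ->
  {within Dbar P a b r,
     continuous (fun q : R * R * R => Vgame P a b q.1.1 q.1.2 q.2)}.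
Proof.
(* f >= h only guarantees that g, hence L, is well defined: V is continuous on
   the whole region u > 0 *)
move=> [ma a_ge0 int_a _] [mb b_ge0 int_b _] _.
have coef_ge0 q : Dbar P a b r q ->
    [/\ 0 <= q.1.2 * q.1.1 / q.2, 0 <= q.1.2 * (1 - q.1.1) / q.2
       & 0 <= 1 - q.1.2].
  case: q => [[p t] u] [/andP[p0 p1] /andP[t0 t1] _ u0 _] /=.
  by rewrite !divr_ge0 ?mulr_ge0 ?subr_ge0// ltW.
apply/subspace_continuousP => -[[p0 t0] u0] Dq0.
have u0_gt0 : 0 < u0 by case: Dq0.
have [k1 k2 k3] := Vgame_coef_continuous (q0 := (p0, t0, u0)) (lt0r_neq0 u0_gt0).
have [c1 c2 c3] := coef_ge0 _ Dq0.
rewrite /from_subspace /= VgameE; under eq_fun do rewrite VgameE.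
apply: cvg_integral_elog_lincomb => //; try exact: cvg_within_filter.
by apply: filterS (withinT _ _) => q /coef_ge0.
Qed.
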